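(* Let $M,N\in\mathbb{S}^{q+r}$. If there exist scalars $\alpha\ge 0$ and $\beta>0$ such that $M-\alpha N\ge\begin{bmatrix}\beta I_q&0\\0&0\end{bmatrix}$ ( * ), then $\mathcal{Z}_r(N)\subseteq\mathcal{Z}_r^+(M)$. Moreover, if $N\in\boldsymbol{\Pi}_{q,r}$ and $M_{22}\le 0$, then $\mathcal{Z}_r(N)\subseteq\mathcal{Z}_r^+(M)$ if and only if there exist $\alpha\ge 0$ and $\beta>0$ such that ( * ) holds.
   Context: $\mathbb{S}^k$ denotes the real symmetric $k\times k$ matrices; for symmetric matrices, $A\ge 0$ ($A>0$) means positive semidefinite (definite), $A\le B$ means $B-A\ge0$. $A^\dagger$ is the Moore–Penrose pseudo-inverse. Any $\Pi\in\mathbb{S}^{q+r}$ (in particular $M,N$) is partitioned as $\Pi=\begin{bmatrix}\Pi_{11}&\Pi_{12}\\ \Pi_{21}&\Pi_{22}\end{bmatrix}$ with $\Pi_{11}\in\mathbb{S}^q$, $\Pi_{22}\in\mathbb{S}^r$. The generalized Schur complement is $\Pi\mid\Pi_{22}:=\Pi_{11}-\Pi_{12}\Pi_{22}^\dagger\Pi_{21}$. The set $\boldsymbol{\Pi}_{q,r}$ consists of all $\Pi\in\mathbb{S}^{q+r}$ with $\Pi_{22}\le 0$, $\Pi\mid\Pi_{22}\ge 0$ and $\ker\Pi_{22}\subseteq\ker\Pi_{12}$. Define $\mathcal{Z}_r(\Pi)=\{Z\in\mathbb{R}^{r\times q}:\begin{bmatrix}I_q\\ Z\end{bmatrix}^\top\Pi\begin{bmatrix}I_q\\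 Z\end{bmatrix}\ge 0\}$ and $\mathcal{Z}_r^+(\Pi)$ the same with $>0$. *)

From HB Require Import structures.
From mathcomp Require Import all_boot all_order all_algebra.
From mathcomp Require Import reals.
Set Implicit Arguments. Unset Strict Implicit. Unset Printing Implicit Defensive.
Import Order.TTheory GRing.Theory Num.Theory.
Local Open Scope ring_scope.

Section Defs.
Variable R : realType.

Definition sym_mx {n : nat} (A : 'M[R]_n) : Prop := A^T = A.

Definition psd {n : nat} (A : 'M[R]_n) : Prop :=
  forall x : 'cV[R]_n, 0 <= (x^T *m A *m x) 0 0.

Definition pd {n : nat} (A : 'M[R]_n) : Prop :=
  forall x : 'cV[R]_n, x != 0 -> 0 < (x^T *m A *m x) 0 0.

Definition loewner_le {n : nat} (A B : 'M[R]_n) : Prop := psd (B - A).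

Definition is_mp_pinv {m n : nat} (A : 'M[R]_(m, n)) (X : 'M[R]_(n, m)) : Prop :=
  [/\ A *m X *m A = A, X *m A *m X = X,
      (A *m X)^T = A *m X & (X *m A)^T = X *m A].

(* The generalized Schur complement uses the Moore-Penrose pseudo-inverse
   of Pi22, given here as a witness X satisfying the Penrose equations. *)
Definition inPi {q r : nat} (Pi : 'M[R]_(q + r)) : Prop :=
  [/\ loewner_le (drsubmx Pi) 0,
      (exists X : 'M[R]_r, is_mp_pinv (drsubmx Pi) X /\
         psd (ulsubmx Pi - ursubmx Pi *m X *m dlsubmx Pi))
    & forall v : 'cV[R]_r, drsubmx Pi *m v = 0 -> ursubmx Pi *m v = 0].

Definition IZ {q r : nat} (Z : 'M[R]_(r, q)) : 'M[R]_(q + r, q) :=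
  col_mx 1%:M Z.

Definition Zset {q r : nat} (Pi : 'M[R]_(q + r)) (Z : 'M[R]_(r, q)) : Prop :=
  psd ((IZ Z)^T *m Pi *m IZ Z).
Definition Zset_plus {q r : nat} (Pi : 'M[R]_(q + r)) (Z : 'M[R]_(r, q)) : Prop :=
  pd ((IZ Z)^T *m Pi *m IZ Z).

Definition cond_star {q r : nat} (M N : 'M[R]_(q + r)) (alpha beta : R) : Prop :=
  loewner_le (block_mx (beta%:M : 'M[R]_q) 0 0 (0 : 'M[R]_r)) (M - alpha *: N).

End Defs.

From mathcomp Require Import all_boot all_order all_algebra.
From mathcomp Require Import all_classical all_reals all_analysis.
From mathcomp Require Import ring lra.
Set Implicit Arguments. Unset Strict Implicit. Unset Printing Implicit Defensive.
Import Order.TTheory GRing.Theory Num.Theory.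
Local Open Scope ring_scope.

(* Sufficiency is immediate: condition (star) reads
   [M(u) >= al N(u) + be |u_1|^2], and graph vectors [(x, Z x)] of any
   [Z] in [Z_r(N)] satisfy [N >= 0].  For the converse ([N] in [Pi_{q,r}],
   [M22 <= 0]) let [X] be the pseudo-inverse of [N22] and [Z0 = - X N21], so
   that [N(x, Z0 x + e) = S(x) + N22(e)] with [S = N | N22 >= 0]:
   1. every [(x, y)], [x != 0], with [N(x, y) >= 0] lies on the graph of some
      [Z] in [Z_r(N)] (rank-one extension), hence [M(x, y) > 0] there;
   2. positivity of [M] on the lines [(x, Z0 x + t k)], [k] in [ker N22],
      and [M22 <= 0] give [ker N22] in [ker M22] and [ker M12], so both forms
      only depend on [(x, w)], [w = N22 e], where [|w|^2 <= c |x|^2] on the cone;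
   3. compactness of the normalized slice gives a margin
      [M(u) >= m |u_1|^2] on the cone [N >= 0];
   4. with a Slater point for [N] the classical S-lemma applied to
      [M - m diag(I, 0)] yields (star); without one [S = 0], and (star)
      follows from an explicit estimate based on Young's inequality. *)

Section QuadraticForms.
Variable R : realType.

Definition qf {n} (A : 'M[R]_n) (v : 'cV[R]_n) : R := (v^T *m A *m v) 0 0.
Definition bil {n} (A : 'M[R]_n) (u v : 'cV[R]_n) : R := (u^T *m A *m v) 0 0.
Definition nsq {n} (v : 'cV[R]_n) : R := (v^T *m v) 0 0.

Lemma bilDl n (A : 'M[R]_n) u1 u2 v : bil A (u1 + u2) v = bil A u1 v + bil A u2 v.
Proof. by rewrite /bil linearD /= !mulmxDl mxE. Qed.

Lemma bilDr n (A : 'M[R]_n) u v1 v2 : bil A u (v1 + v2) = bil A u v1 + bil A u v2.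
Proof. by rewrite /bil mulmxDr mxE. Qed.

Lemma bilZl n (A : 'M[R]_n) c u v : bil A (c *: u) v = c * bil A u v.
Proof. by rewrite /bil linearZ /= -!scalemxAl mxE. Qed.

Lemma bilZr n (A : 'M[R]_n) c u v : bil A u (c *: v) = c * bil A u v.
Proof. by rewrite /bil -scalemxAr mxE. Qed.

Lemma bilC n (A : 'M[R]_n) u v : A^T = A -> bil A u v = bil A v u.
Proof.
move=> sA; rewrite /bil -[in LHS](trmxK (u^T *m A *m v)) mxE.
by rewrite !trmx_mul sA trmxK mulmxA.
Qed.

Lemma bil_mulmx n m p (A : 'M[R]_n) (B : 'M[R]_(n, m)) (C : 'M[R]_(n, p)) u v :
  bil A (B *m u) (C *m v) = (u^T *m (B^T *m A *m C) *m v) 0 0.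
Proof. by rewrite /bil trmx_mul !mulmxA. Qed.

Lemma qf_mulmx n m (A : 'M[R]_n) (B : 'M[R]_(n, m)) u :
  qf A (B *m u) = qf (B^T *m A *m B) u.
Proof. exact: bil_mulmx. Qed.

Lemma qfD n (A : 'M[R]_n) u v : A^T = A ->
  qf A (u + v) = qf A u + 2 * bil A u v + qf A v.
Proof. by move=> sA; rewrite /qf -!/(bil _ _ _) bilDl !bilDr (bilC v u sA); ring. Qed.

Lemma qfZ n (A : 'M[R]_n) c u : qf A (c *: u) = c ^+ 2 * qf A u.
Proof. by rewrite /qf -!/(bil _ _ _) bilZl bilZr mulrA expr2. Qed.

Lemma qf0 n (A : 'M[R]_n) : qf A 0 = 0.
Proof. by rewrite /qf mulmx0 mxE. Qed.

Lemma qf_mxD n (A B : 'M[R]_n) u : qf (A + B) u = qf A u + qf B u.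
Proof. by rewrite /qf mulmxDr mulmxDl mxE. Qed.

Lemma qf_mxZ n (A : 'M[R]_n) c u : qf (c *: A) u = c * qf A u.
Proof. by rewrite /qf -scalemxAr -scalemxAl mxE. Qed.

Lemma qf_mxN n (A : 'M[R]_n) u : qf (- A) u = - qf A u.
Proof. by rewrite -scaleN1r qf_mxZ mulN1r. Qed.

Lemma qf_mxB n (A B : 'M[R]_n) u : qf (A - B) u = qf A u - qf B u.
Proof. by rewrite qf_mxD qf_mxN. Qed.

Lemma qf_mx0 n (u : 'cV[R]_n) : qf 0 u = 0.
Proof. by rewrite /qf mulmx0 mul0mx mxE. Qed.

Lemma nsd_qf n (A : 'M[R]_n) u : loewner_le A 0 -> qf A u <= 0.
Proof. by move=> /(_ u); rewrite -/(qf _ _) qf_mxB qf_mx0 sub0r oppr_ge0. Qed.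

Lemma qfD_ker n (A : 'M[R]_n) u v : A^T = A -> A *m v = 0 -> qf A (u + v) = qf A u.
Proof.
move=> sA Av; rewrite qfD // /bil /qf -!mulmxA Av !mulmx0 !mxE.
by rewrite mulr0 !addr0.
Qed.

Lemma nsq_qf n (v : 'cV[R]_n) : nsq v = qf 1%:M v.
Proof. by rewrite /nsq /qf mulmx1. Qed.

Lemma nsqE n (v : 'cV[R]_n) : nsq v = \sum_i (v i 0) ^+ 2.
Proof. by rewrite /nsq mxE; apply: eq_bigr => i _; rewrite mxE expr2. Qed.

Lemma nsq_ge0 n (v : 'cV[R]_n) : 0 <= nsq v.
Proof. by rewrite nsqE sumr_ge0 // => i _; rewrite sqr_ge0. Qed.

Lemma nsq0 n : nsq (0 : 'cV[R]_n) = 0.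
Proof. by rewrite /nsq mulmx0 mxE. Qed.

Lemma nsq_eq0 n (v : 'cV[R]_n) : (nsq v == 0) = (v == 0).
Proof.
apply/idP/eqP => [|->]; last by rewrite nsq0.
rewrite nsqE psumr_eq0 => [/allP v0|i _]; last exact: sqr_ge0.
apply/matrixP => i j; rewrite (ord1 j) mxE.
by apply/eqP; rewrite -sqrf_eq0; exact: v0 (mem_index_enum _).
Qed.

Lemma nsq_gt0 n (v : 'cV[R]_n) : (0 < nsq v) = (v != 0).
Proof. by rewrite lt_def nsq_ge0 nsq_eq0 andbT. Qed.

Lemma nsqZ n c (v : 'cV[R]_n) : nsq (c *: v) = c ^+ 2 * nsq v.
Proof. by rewrite !nsq_qf qfZ. Qed.

Lemma nsqN n (v : 'cV[R]_n) : nsq (- v) = nsq v.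
Proof. by rewrite -scaleN1r nsqZ sqrrN expr1n mul1r. Qed.

Lemma young n c (x v : 'cV[R]_n) : 0 < c ->
  - (c * nsq x + c^-1 * nsq v) <= 2 * (x^T *m v) 0 0.
Proof.
move=> c_gt0; have := nsq_ge0 (c *: x + v).
rewrite nsq_qf qfD ?trmx1 // qfZ bilZl -!nsq_qf /bil mulmx1 => sq_ge0.
rewrite -subr_ge0 opprK -(pmulr_rge0 _ c_gt0).
suff -> : c * (2 * (x^T *m v) 0 0 + (c * nsq x + c^-1 * nsq v))
    = c ^+ 2 * nsq x + 2 * (c * (x^T *m v) 0 0) + nsq v by [].
by field; rewrite gt_eqF.
Qed.

Lemma coord_le_nsq n (v : 'cV[R]_n) i : (v i 0) ^+ 2 <= nsq v.
Proof. by rewrite nsqE (bigD1 i) //= lerDl sumr_ge0 // => j _; exact: sqr_ge0. Qed.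

Lemma nsq_col p q (x : 'cV[R]_p) (w : 'cV[R]_q) : nsq (col_mx x w) = nsq x + nsq w.
Proof. by rewrite /nsq tr_col_mx mul_row_col mxE. Qed.

Lemma cauchy_schwarz n (A : 'M[R]_n) u v : A^T = A -> psd A ->
  bil A u v ^+ 2 <= qf A u * qf A v.
Proof.
move=> sA pA.
have line t : 0 <= qf A u + 2 * t * bil A u v + t ^+ 2 * qf A v.
  by have := pA (u + t *: v); rewrite -/(qf _ _) qfD // qfZ bilZr mulrA.
have [qv0|qv_neq0] := eqVneq (qf A v) 0.
  rewrite qv0 mulr0; have [->|b_neq0] := eqVneq (bil A u v) 0; first by rewrite expr0n.
  have := line (- (qf A u + 1) / (2 * bil A u v)); rewrite qv0 mulr0 addr0.
  have -> : 2 * (- (qf A u + 1) / (2 * bil A u v)) * bil A u v = - (qf A u + 1).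
    by field.
  lra.
have qv_gt0 : 0 < qf A v by rewrite lt_def qv_neq0; exact: pA.
have := line (- bil A u v / qf A v).
have -> : qf A u + 2 * (- bil A u v / qf A v) * bil A u v
    + (- bil A u v / qf A v) ^+ 2 * qf A v = qf A u - bil A u v ^+ 2 / qf A v.
  by field.
by rewrite subr_ge0 ler_pdivrMr.
Qed.

Lemma bil_delta n (A : 'M[R]_n) i v : bil A (delta_mx i 0) v = (A *m v) i 0.
Proof. by rewrite /bil trmx_delta -mulmxA -rowE mxE. Qed.

Lemma psd_qf_eq0 n (A : 'M[R]_n) v : A^T = A -> psd A -> qf A v = 0 -> A *m v = 0.
Proof.
move=> sA pA qv0; apply/matrixP => i j; rewrite (ord1 j) [RHS]mxE -bil_delta.
apply/eqP; rewrite -sqrf_eq0 eq_le sqr_ge0 andbT.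
by have := cauchy_schwarz (delta_mx i 0) v sA pA; rewrite qv0 mulr0.
Qed.

Lemma nsd_qf_eq0 n (A : 'M[R]_n) v :
  A^T = A -> loewner_le A 0 -> qf A v = 0 -> A *m v = 0.
Proof.
move=> sA nA qv0; have /eqP : (0 - A) *m v = 0.
  apply: psd_qf_eq0 nA _; first by rewrite linearB /= trmx0 sA.
  by rewrite qf_mxB qf_mx0 qv0 subrr.
by rewrite mulmxBl mul0mx sub0r oppr_eq0 => /eqP.
Qed.

Lemma psd_image_bound n (A : 'M[R]_n) : A^T = A -> psd A ->
  exists2 K, 0 <= K & forall v, nsq (A *m v) <= K * qf A v.
Proof.
move=> sA pA; exists (\sum_i qf A (delta_mx i 0)).
  by apply: sumr_ge0 => i _; exact: pA.
move=> v; rewrite nsqE mulr_suml; apply: ler_sum => i _.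
by rewrite -bil_delta; exact: cauchy_schwarz.
Qed.

Lemma psd_norm_bound n (A : 'M[R]_n) : A^T = A -> psd A ->
  exists2 K, 0 <= K & forall v, qf A v <= K * nsq v.
Proof.
move=> sA pA; have [K K_ge0 HK] := psd_image_bound sA pA; exists K => // v.
have psd1 : psd (1%:M : 'M[R]_n) by move=> x; rewrite -/(qf _ _) -nsq_qf nsq_ge0.
have cs : qf A v ^+ 2 <= nsq v * nsq (A *m v).
  have := cauchy_schwarz v (A *m v) (trmx1 _ _) psd1.
  by rewrite -!nsq_qf /bil mulmx1 mulmxA.
have [qv0|qv_neq0] := eqVneq (qf A v) 0; first by rewrite qv0 mulr_ge0 ?nsq_ge0.
have qv_gt0 : 0 < qf A v by rewrite lt_def qv_neq0; exact: pA.
rewrite -(ler_pM2r qv_gt0) -mulrA (mulrC (nsq v)) mulrA -expr2.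
by apply: le_trans cs _; rewrite mulrC ler_wpM2r ?nsq_ge0.
Qed.

End QuadraticForms.

Section RealQuadratics.
Variable R : realType.

Lemma pos_affine_const (a b : R) : (forall t, 0 < a + b * t) -> b = 0.
Proof.
move=> pos; apply/eqP/negP => /negP b_neq0.
by have := pos (- a / b); rewrite mulrC divfK // addrN ltxx.
Qed.

Lemma pos_quadratic_const (a b c : R) :
  (forall t, 0 < a + 2 * b * t + c * t ^+ 2) -> c <= 0 -> c = 0 /\ b = 0.
Proof.
move=> pos c_le0.
have even t : 0 < a + c * t ^+ 2.
  by have := pos t; have := pos (- t); rewrite sqrrN; lra.
have c0 : c = 0.
  apply/eqP; rewrite eq_le c_le0 leNgt; apply/negP => c_lt0.
  have := even (Num.sqrt (`|a| / - c)).
  rewrite sqr_sqrtr; last by rewrite divr_ge0 // oppr_ge0 ltW.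
  have -> : c * (`|a| / - c) = - `|a| by field; rewrite lt_eqF.
  by rewrite subr_gt0 ltNge ler_norm.
split=> //; have /eqP : 2 * b = 0.
  by apply: (@pos_affine_const a) => t; have := pos t; rewrite c0 mul0r addr0.
by rewrite mulf_eq0 pnatr_eq0 /= => /eqP.
Qed.

Lemma indefinite_quadratic_roots (a b c : R) : 0 < a -> c < 0 ->
  exists s1 s2, [/\ 0 < s1, s2 < 0, a + 2 * b * s1 + c * s1 ^+ 2 = 0,
                    a + 2 * b * s2 + c * s2 ^+ 2 = 0 & c * (s1 * s2) = a].
Proof.
move=> a_gt0 c_lt0; have c_neq0 : c != 0 by rewrite lt_eqF.
set sq := Num.sqrt (b ^+ 2 - a * c).
have sq_ge0 : 0 <= sq by rewrite sqrtr_ge0.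
have sq2 : sq ^+ 2 = b ^+ 2 - a * c by rewrite sqr_sqrtr //; nra.
have ac : a * c = b ^+ 2 - sq ^+ 2 by rewrite sq2; ring.
have root s : c * s = - b - sq \/ c * s = - b + sq -> a + 2 * b * s + c * s ^+ 2 = 0.
  move=> cs; apply: (mulIf c_neq0); rewrite mul0r.
  have -> : (a + 2 * b * s + c * s ^+ 2) * c = (c * s) ^+ 2 + 2 * b * (c * s) + a * c.
    by ring.
  by rewrite ac; case: cs => ->; ring.
exists ((- b - sq) / c), ((- b + sq) / c); split.
- by rewrite ltr_ndivlMr // mul0r; nra.
- by rewrite ltr_ndivrMr // mul0r; nra.
- by apply: root; left; rewrite mulrC divfK.
- by apply: root; right; rewrite mulrC divfK.
- have -> : c * ((- b - sq) / c * ((- b + sq) / c)) = (- b - sq) * (- b + sq) / c.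
    by field.
  have -> : (- b - sq) * (- b + sq) = a * c by rewrite ac; ring.
  by rewrite mulfK.
Qed.

(* Key inequality of the two-dimensional S-lemma: if [p + 2 q s + r s^2] is
   nonnegative at the two roots of [a + 2 b s + c s^2] ([a > 0 > c]), then
   [p (-c) + r a >= 0]; combine the two values with weights [-s2] and [s1]. *)
Lemma nonneg_at_roots (a b c p q r : R) : 0 < a -> c < 0 ->
  (forall s, a + 2 * b * s + c * s ^+ 2 = 0 -> 0 <= p + 2 * q * s + r * s ^+ 2) ->
  0 <= p * - c + r * a.
Proof.
move=> a_gt0 c_lt0 g_ge0.
have [s1 [s2 [s1_gt0 s2_lt0 f1 f2 prod]]] := indefinite_quadratic_roots b a_gt0 c_lt0.
have comb : (- s2) * (p + 2 * q * s1 + r * s1 ^+ 2) + s1 * (p + 2 * q * s2 + r * s2 ^+ 2)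
    = (s1 - s2) * (p - r * (s1 * s2)) by ring.
have : 0 <= (s1 - s2) * (p - r * (s1 * s2)).
  rewrite -comb addr_ge0 // mulr_ge0 ?g_ge0 //; lra.
rewrite pmulr_rge0 ?subr_gt0 ?(lt_trans s2_lt0) // => h.
have -> : p * - c + r * a = - c * (p - r * (s1 * s2)) by rewrite -prod; ring.
by rewrite mulr_ge0 // oppr_ge0 ltW.
Qed.

End RealQuadratics.

Section SLemma.
Variables (R : realType) (n : nat) (F H : 'M[R]_n).
Hypotheses (sF : F^T = F) (sH : H^T = H).
Hypothesis F_to_H : forall u, 0 <= qf F u -> 0 <= qf H u.

(* On the plane spanned by [v] with [F v > 0] and [w] with [F w < 0], the
   implication [F >= 0 -> H >= 0] forces [H v / F v >= H w / F w]. *)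
Lemma slemma_plane v w : 0 < qf F v -> qf F w < 0 ->
  0 <= qf H v * - qf F w + qf H w * qf F v.
Proof.
move=> Fv_gt0 Fw_lt0.
apply: (nonneg_at_roots (b := bil F v w) (q := bil H v w) Fv_gt0 Fw_lt0) => s Fs.
have line A : A^T = A -> qf A (v + s *: w) = qf A v + 2 * bil A v w * s + qf A w * s ^+ 2.
  by move=> sA; rewrite qfD // qfZ bilZr; ring.
by rewrite -line //; apply: F_to_H; rewrite line // Fs.
Qed.

(* The S-lemma (Yakubovich): under a Slater point, [F >= 0 -> H >= 0] yields
   a multiplier [al >= 0] with [H >= al F]; [al] separates the ratios [H/F]
   on [F < 0] from those on [F > 0]. *)
Lemma s_lemma v0 : 0 < qf F v0 ->
  exists2 al, 0 <= al & forall u, al * qf F u <= qf H u.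
Proof.
move=> Fv0_gt0.
pose L : set R := fun t => exists2 w, qf F w < 0 & t = qf H w / qf F w.
have L_ub v : 0 < qf F v -> ubound L (qf H v / qf F v).
  move=> Fv_gt0 _ [w Fw_lt0 ->]; rewrite -subr_ge0.
  have -> : qf H v / qf F v - qf H w / qf F w
      = (qf H v * - qf F w + qf H w * qf F v) / (qf F v * - qf F w).
    by field; rewrite lt_eqF // gt_eqF.
  by rewrite divr_ge0 ?slemma_plane // mulr_ge0 ?oppr_ge0 // ltW.
exists (Num.max 0 (sup L)) => [|u]; first by rewrite le_max lexx.
have [Fu_lt0|Fu_gt0|Fu0] := ltgtP (qf F u) 0; last by rewrite Fu0 mulr0 F_to_H ?Fu0.
- have supL : has_sup L.
    by split; [exists (qf H u / qf F u), u | exists (qf H v0 / qf F v0); exact: L_ub].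
  rewrite -ler_ndivrMr // (le_trans (sup_upper_bound supL _)) ?le_max ?lexx ?orbT //.
  by exists u.
- have ratio_ge0 : 0 <= qf H u / qf F u by rewrite divr_ge0 ?F_to_H ?ltW.
  rewrite -ler_pdivlMr // ge_max ratio_ge0 /=.
  have [supL|no_supL] := pselect (has_sup L); last by rewrite sup_out.
  by apply: ge_sup; [case: supL | exact: L_ub].
Qed.

End SLemma.

Section Compactness.
Import numFieldNormedType.Exports.
Local Open Scope classical_set_scope.
Variable R : realType.

Lemma qf_continuous n (Q : 'M[R]_n) : continuous (fun v : 'rV[R]_n => qf Q v^T).
Proof.
have -> : (fun v : 'rV[R]_n => qf Q v^T) =
    (fun v => \sum_j (\sum_i v 0 i * Q i j) * v 0 j).
  apply/funext => v; rewrite /qf trmxK mxE; apply: eq_bigr => j _; rewrite !mxE.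
  by congr (_ * _); apply: eq_bigr => i _; rewrite mxE.
have column j : continuous (fun v : 'rV[R]_n => \sum_i v 0 i * Q i j).
  apply: continuous_big => [|i _ v]; first exact: add_continuous.
  by apply: continuousM; [exact: coord_continuous | exact: cst_continuous].
apply: continuous_big => [|j _ v]; first exact: add_continuous.
by apply: continuousM; [exact: column | exact: coord_continuous].
Qed.

Lemma qf_positive_min n (A C Q : 'M[R]_n) (rho : R) :
  (forall p, qf A p = 1 -> nsq p <= rho -> 0 <= qf C p -> 0 < qf Q p) ->
  exists2 m, 0 < m & forall p, qf A p = 1 -> nsq p <= rho -> 0 <= qf C p -> m <= qf Q p.
Proof.
move=> Q_gt0; pose f (B : 'M[R]_n) (v : 'rV[R]_n) := qf B v^T.
pose K := (f A @^-1` [set x | x = 1]) `&` ((f 1%:M @^-1` [set x | x <= rho])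
            `&` (f C @^-1` [set x | 0 <= x])).
have K_compact : compact K.
  pose box := [set v : 'rV[R]_n | forall i, `[- (1 + rho), 1 + rho] (v ord0 i)].
  apply: (@subclosed_compact _ K box).
  - have f_cont B (D : set R) : closed D -> closed (f B @^-1` D).
      by apply: preimage_closed => v _; exact: qf_continuous.
    by apply: closedI; [|apply: closedI]; apply: f_cont;
      [exact: closed_eq | exact: closed_le | exact: closed_ge].
  - apply: (@rV_compact _ _ (fun=> `[- (1 + rho), 1 + rho]%classic)) => _.
    exact: segment_compact.
  move=> v [_ [/= v_le _]] i /=; rewrite in_itv /= -ler_norml.
  have x_le : `|v ord0 i| <= 1 + v ord0 i ^+ 2.
    rewrite -real_normK ?num_real //; have := sqr_ge0 (`|v ord0 i| - 1); nra.
  apply: le_trans x_le _; rewrite lerD2l; apply: le_trans v_le.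
  by have := coord_le_nsq v^T i; rewrite mxE nsq_qf.
have [[v0 Kv0]|K_empty] := pselect (exists v, K v); last first.
  exists 1 => // p Ap1 p_le Cp_ge0; exfalso; apply: K_empty; exists p^T.
  by rewrite /K /f /= trmxK -nsq_qf.
have f_cont : {within K, continuous (f Q)}.
  by apply: continuous_subspaceT; exact: qf_continuous.
have [c Kc c_min] := compact_EVT_min (ex_intro _ v0 Kv0) K_compact f_cont.
rewrite inE in Kc; case: Kc => /= Ac1 [c_le Cc_ge0].
exists (f Q c); first by apply: Q_gt0 => //; rewrite nsq_qf.
move=> p Ap1 p_le Cp_ge0; have := c_min p^T; rewrite /f trmxK; apply.
by rewrite inE /K /= trmxK -nsq_qf.
Qed.

End Compactness.

Section RankOneExtension.
Variable R : realType.

Lemma rank_one_mul m n (d : 'cV[R]_m) (u v : 'cV[R]_n) :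
  (d *m u^T) *m v = (u^T *m v) 0 0 *: d.
Proof. by rewrite -mulmxA {1}[u^T *m v]mx11_scalar mul_mx_scalar. Qed.

Lemma rank_one_extension m n (S : 'M[R]_n) (P : 'M[R]_m) (x : 'cV[R]_n) d :
  S^T = S -> psd S -> x != 0 -> 0 <= qf S x + qf P d ->
  exists D : 'M[R]_(m, n), D *m x = d /\ forall a, 0 <= qf S a + qf P (D *m a).
Proof.
move=> sS pS x_neq0 sum_ge0; have Sx_ge0 := pS x; rewrite -/(qf _ _) in Sx_ge0.
have [Sx0|Sx_neq0] := eqVneq (qf S x) 0.
  have nx_neq0 : nsq x != 0 by rewrite nsq_eq0.
  exists ((nsq x)^-1 *: (d *m x^T)); split.
    by rewrite -scalemxAl rank_one_mul -/(nsq x) scalerA mulVf // scale1r.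
  move=> a; rewrite -scalemxAl rank_one_mul scalerA qfZ.
  have Pd_ge0 : 0 <= qf P d by move: sum_ge0; rewrite Sx0 add0r.
  have Sa_ge0 := pS a; rewrite -/(qf _ _) in Sa_ge0.
  by apply: addr_ge0 => //; apply: mulr_ge0 => //; exact: sqr_ge0.
have Sx_gt0 : 0 < qf S x by rewrite lt_def Sx_neq0 Sx_ge0.
exists ((qf S x)^-1 *: (d *m (S *m x)^T)); split.
  rewrite -scalemxAl rank_one_mul scalerA trmx_mul sS -/(qf _ _).
  by rewrite mulVf // scale1r.
move=> a; rewrite -scalemxAl rank_one_mul scalerA qfZ trmx_mul sS -/(bil _ _ _).
have cs := cauchy_schwarz x a sS pS.
have Sa_ge0 := pS a; rewrite -/(qf _ _) in Sa_ge0.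
set s := qf S x in Sx_gt0 sum_ge0 cs *; set t := bil S x a in cs *.
set c := qf P d in sum_ge0 *.
have -> : qf S a + ((s^-1 * t) ^+ 2) * c = qf S a - t ^+ 2 / s + t ^+ 2 / s ^+ 2 * (s + c).
  by field; rewrite gt_eqF.
apply: addr_ge0; first by rewrite subr_ge0 ler_pdivrMr // mulrC.
by rewrite mulr_ge0 // divr_ge0 // sqr_ge0.
Qed.

End RankOneExtension.

Section MoorePenrose.
Variable R : realType.

Lemma mp_unique m n (A : 'M[R]_(m, n)) X Y :
  is_mp_pinv A X -> is_mp_pinv A Y -> X = Y.
Proof.
case=> [AXA XAX AXs XAs] [AYA YAY AYs YAs].
have XAY_X : X *m A *m Y = X.
  have -> : X *m A *m Y = X *m ((A *m X)^T *m (A *m Y)^T) by rewrite AXs AYs !mulmxA XAX.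
  by rewrite -trmx_mul mulmxA AYA AXs mulmxA XAX.
have XAY_Y : X *m A *m Y = Y.
  have -> : X *m A *m Y = (X *m A)^T *m (Y *m A)^T *m Y.
    rewrite XAs YAs.
    have -> : X *m A *m (Y *m A) *m Y = X *m A *m (Y *m A *m Y) by rewrite !mulmxA.
    by rewrite YAY.
  have -> : (X *m A)^T *m (Y *m A)^T = (Y *m A)^T.
    rewrite -trmx_mul mulmxA.
    have -> : Y *m A *m X *m A = Y *m (A *m X *m A) by rewrite !mulmxA.
    by rewrite AXA.
  by rewrite YAs YAY.
by rewrite -XAY_X XAY_Y.
Qed.

Lemma mp_tr m n (A : 'M[R]_(m, n)) X : is_mp_pinv A X -> is_mp_pinv A^T X^T.
Proof.
case=> [AXA XAX AXs XAs]; split.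
- by rewrite -!trmx_mul mulmxA AXA.
- by rewrite -!trmx_mul mulmxA XAX.
- by rewrite -trmx_mul XAs.
- by rewrite -trmx_mul AXs.
Qed.

Lemma mp_sym n (A : 'M[R]_n) X : A^T = A -> is_mp_pinv A X -> X^T = X.
Proof. by move=> sA hX; apply: (mp_unique (A := A)) => //; rewrite -{1}sA; exact: mp_tr. Qed.

End MoorePenrose.

Section Blocks.
Variables (R : realType) (q r : nat).
Implicit Types (A N : 'M[R]_(q + r)) (Z : 'M[R]_(r, q)).

Lemma IZ_mul Z (x : 'cV[R]_q) : IZ Z *m x = col_mx x (Z *m x).
Proof. by rewrite /IZ mul_col_mx mul1mx. Qed.

Lemma ZsetP A Z : Zset A Z <-> forall a, 0 <= qf A (col_mx a (Z *m a)).
Proof.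
by split=> h a; [rewrite -IZ_mul qf_mulmx; exact: h | have := h a; rewrite -IZ_mul qf_mulmx].
Qed.

Lemma Zset_plusP A Z :
  Zset_plus A Z <-> forall a, a != 0 -> 0 < qf A (col_mx a (Z *m a)).
Proof.
split=> h a a_neq0; first by rewrite -IZ_mul qf_mulmx; exact: h.
by have := h a a_neq0; rewrite -IZ_mul qf_mulmx.
Qed.

Lemma quadIZ Z A : (IZ Z)^T *m A *m IZ Z =
  ulsubmx A + Z^T *m dlsubmx A + ursubmx A *m Z + Z^T *m drsubmx A *m Z.
Proof.
rewrite -{1}[A]submxK /IZ tr_col_mx trmx1 mul_row_block !mul1mx mul_row_col mulmx1.
by rewrite mulmxDl addrA; congr (_ + _ + _ + _); rewrite mulmxA.
Qed.

Definition E2 : 'M[R]_(q + r, r) := col_mx 0 1%:M.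

Lemma IZ_E2 Z (x : 'cV[R]_q) (e : 'cV[R]_r) :
  IZ Z *m x + E2 *m e = col_mx x (Z *m x + e).
Proof. by rewrite IZ_mul /E2 mul_col_mx mul0mx mul1mx add_col_mx addr0. Qed.

Lemma quadE2 A : E2^T *m A *m E2 = drsubmx A.
Proof.
rewrite -{1}[A]submxK /E2 tr_col_mx trmx1 trmx0 mul_row_block !mul0mx !mul1mx.
by rewrite !add0r mul_row_col mulmx0 add0r mulmx1.
Qed.

Lemma crossIZ Z A : (IZ Z)^T *m A *m E2 = ursubmx A + Z^T *m drsubmx A.
Proof.
rewrite -{1}[A]submxK /IZ /E2 tr_col_mx trmx1 mul_row_block !mul1mx mul_row_col.
by rewrite !mulmx0 add0r mulmx1.
Qed.

Lemma mul_col0 A (k : 'cV[R]_r) :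
  A *m col_mx 0 k = col_mx (ursubmx A *m k) (drsubmx A *m k).
Proof. by rewrite -{1}[A]submxK mul_block_col !mulmx0 !add0r. Qed.

Lemma sym_blocks A : A^T = A ->
  [/\ (ulsubmx A)^T = ulsubmx A, (ursubmx A)^T = dlsubmx A,
      (dlsubmx A)^T = ursubmx A & (drsubmx A)^T = drsubmx A].
Proof. by move=> sA; rewrite trmx_ulsub trmx_ursub trmx_dlsub trmx_drsub sA. Qed.

Lemma qf_block_diag (B : 'M[R]_q) (C : 'M[R]_r) x w :
  qf (block_mx B 0 0 C) (col_mx x w) = qf B x + qf C w.
Proof. by rewrite /qf tr_col_mx mul_row_block !mulmx0 addr0 add0r mul_row_col mxE. Qed.

Lemma qf_shift_ker A x (y k : 'cV[R]_r) : A^T = A ->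
  drsubmx A *m k = 0 -> ursubmx A *m k = 0 ->
  qf A (col_mx x (y + k)) = qf A (col_mx x y).
Proof.
move=> sA A22k A12k.
have -> : col_mx x (y + k) = col_mx x y + col_mx 0 k by rewrite add_col_mx addr0.
by rewrite qfD_ker // mul_col0 A22k A12k col_mx0.
Qed.

Lemma cond_starP M N al be : cond_star M N al be <->
  forall u, al * qf N u + be * nsq (usubmx u) <= qf M u.
Proof.
have qD u : qf (block_mx (be%:M : 'M[R]_q) 0 0 (0 : 'M[R]_r)) u = be * nsq (usubmx u).
  by rewrite -[u in qf _ u]vsubmxK qf_block_diag qf_mx0 addr0 -scalemx1 qf_mxZ nsq_qf.
split=> h u; first by have := h u; rewrite -/(qf _ _) !qf_mxB qf_mxZ qD; lra.
by rewrite /psd -/(qf _ _) !qf_mxB qf_mxZ qD; have := h u; lra.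
Qed.

End Blocks.
Arguments E2 {R q r}.

(* For [N] in [Pi_{q,r}] with pseudo-inverse [X] of [N22], the change of
   variables [y = Z0 x + e], [Z0 = - X N21], diagonalizes the form of [N]:
   [N(x, Z0 x + e) = S(x) + N22(e)] with [S = N | N22] the Schur complement. *)
Section SchurComplement.
Variables (R : realType) (q r : nat) (N : 'M[R]_(q + r)) (X : 'M[R]_r).
Hypotheses (sN : N^T = N) (hX : is_mp_pinv (drsubmx N) X).
Hypothesis hker : forall v : 'cV[R]_r, drsubmx N *m v = 0 -> ursubmx N *m v = 0.

Local Notation N11 := (ulsubmx N).
Local Notation N12 := (ursubmx N).
Local Notation N21 := (dlsubmx N).
Local Notation N22 := (drsubmx N).

Definition schur : 'M[R]_q := N11 - N12 *m X *m N21.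
Definition Z0 : 'M[R]_(r, q) := - (X *m N21).

Lemma X_sym : X^T = X.
Proof. by apply: mp_sym hX; case: (sym_blocks sN). Qed.

Lemma N22_X_N22 : N22 *m X *m N22 = N22.
Proof. by case: hX. Qed.

Lemma X_N22_X : X *m N22 *m X = X.
Proof. by case: hX. Qed.

Lemma ker_mx m (K : 'M[R]_(r, m)) : N22 *m K = 0 -> N12 *m K = 0.
Proof.
move=> N22K0; apply/matrixP => i j.
have /hker/matrixP/(_ i 0) : N22 *m col j K = 0.
  by rewrite colE mulmxA N22K0 mul0mx.
by rewrite colE mulmxA -colE !mxE.
Qed.

Lemma N12_X_N22 : N12 *m X *m N22 = N12.
Proof.
apply/eqP; rewrite -subr_eq0 -{2}[N12]mulmx1 -mulmxA -mulmxBr; apply/eqP.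
by apply: ker_mx; rewrite mulmxBr mulmx1 mulmxA N22_X_N22 subrr.
Qed.

Lemma schur_sym : schur^T = schur.
Proof.
case: (sym_blocks sN) => tN11 tN12 tN21 _.
by rewrite /schur linearB /= !trmx_mul tN11 tN12 tN21 X_sym mulmxA.
Qed.

Lemma Z0_tr : Z0^T = - (N12 *m X).
Proof. by case: (sym_blocks sN) => _ _ tN21 _; rewrite /Z0 linearN /= trmx_mul X_sym tN21. Qed.

Lemma cross_Z0 : (IZ Z0)^T *m N *m E2 = 0.
Proof. by rewrite crossIZ Z0_tr mulNmx N12_X_N22 subrr. Qed.

Lemma quad_Z0 : (IZ Z0)^T *m N *m IZ Z0 = schur.
Proof.
rewrite quadIZ Z0_tr /Z0 mulNmx mulmxN !mulNmx mulmxN opprK !mulmxA.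
have -> : N12 *m X *m N22 *m X = N12 *m X by rewrite -!mulmxA (mulmxA X) X_N22_X.
by rewrite /schur addrNK.
Qed.

Lemma schur_qf x (e : 'cV[R]_r) : qf N (col_mx x (Z0 *m x + e)) = qf schur x + qf N22 e.
Proof.
rewrite -IZ_E2 qfD // bil_mulmx cross_Z0 mulmx0 mul0mx mxE mulr0 addr0.
by rewrite !qf_mulmx quad_Z0 quadE2.
Qed.

Lemma schur_qfE x (y : 'cV[R]_r) :
  qf N (col_mx x y) = qf schur x + qf N22 (y - Z0 *m x).
Proof. by rewrite -schur_qf addrC subrK. Qed.

Hypothesis hS : psd schur.

(* Every vector [(x, y)], [x != 0], of the cone [N >= 0] lies on the graph of
   some [Z] in [Z_r(N)]: extend [x |-> y - Z0 x] to a rank-one correction. *)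
Lemma lift_to_Zset x y :
  x != 0 -> 0 <= qf N (col_mx x y) -> exists Z, Zset N Z /\ Z *m x = y.
Proof.
move=> x_neq0; rewrite schur_qfE => Nxy_ge0.
have [D [Dx D_ok]] := rank_one_extension schur_sym hS x_neq0 Nxy_ge0.
exists (Z0 + D); split; last by rewrite mulmxDl Dx addrC subrK.
by apply/ZsetP => a; rewrite mulmxDl schur_qf; exact: D_ok.
Qed.

End SchurComplement.

(* Necessity of (star): [N] is in [Pi_{q,r}] (via [X], [hker], [hN22], [hS]),
   [M22 <= 0], [Z_r(N)] is contained in [Z_r^+(M)], and [i0] witnesses [q > 0]. *)
Section Converse.
Variables (R : realType) (q r : nat) (M N : 'M[R]_(q + r)) (X : 'M[R]_r).
Hypotheses (sM : M^T = M) (sN : N^T = N) (hX : is_mp_pinv (drsubmx N) X).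
Hypothesis hker : forall v : 'cV[R]_r, drsubmx N *m v = 0 -> ursubmx N *m v = 0.
Hypotheses (hN22 : loewner_le (drsubmx N) 0) (hS : psd (schur N X)).
Hypothesis hM22 : loewner_le (drsubmx M) 0.
Hypothesis hZ : forall Z : 'M[R]_(r, q), Zset N Z -> Zset_plus M Z.
Variable i0 : 'I_q.

Local Notation Z0 := (Z0 N X).
Local Notation S := (schur N X).
Local Notation N22 := (drsubmx N).

Lemma M_pos_on_cone x y : x != 0 -> 0 <= qf N (col_mx x y) -> 0 < qf M (col_mx x y).
Proof.
move=> x_neq0 /(lift_to_Zset sN hX hker hS x_neq0) [Z [/hZ/Zset_plusP M_pos <-]].
exact: M_pos.
Qed.

(* On the lines [(x, Z0 x + t k)] with [N22 k = 0], [N] is constant and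
   nonnegative, so [M] is a positive quadratic in [t] with leading coefficient
   [M22(k) <= 0]; hence it is constant. *)
Lemma cone_line_const (x : 'cV[R]_q) (k : 'cV[R]_r) : x != 0 -> N22 *m k = 0 ->
  qf (drsubmx M) k = 0 /\ bil M (IZ Z0 *m x) (E2 *m k) = 0.
Proof.
move=> x_neq0 N22k0.
have N22k_qf : qf N22 k = 0 by rewrite /qf -mulmxA N22k0 mulmx0 mxE.
apply: (@pos_quadratic_const _ (qf M (IZ Z0 *m x))) => [t|]; last exact: nsd_qf.
have -> : qf M (IZ Z0 *m x) + 2 * bil M (IZ Z0 *m x) (E2 *m k) * t
    + qf (drsubmx M) k * t ^+ 2 = qf M (col_mx x (Z0 *m x + t *: k)).
  by rewrite -IZ_E2 -scalemxAr qfD // bilZr qfZ [qf M (E2 *m k)]qf_mulmx quadE2; ring.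
apply: M_pos_on_cone => //.
by rewrite schur_qf // qfZ N22k_qf mulr0 addr0; exact: (hS x).
Qed.

Lemma kernel_inclusion (k : 'cV[R]_r) : N22 *m k = 0 ->
  drsubmx M *m k = 0 /\ ursubmx M *m k = 0.
Proof.
move=> N22k0.
have delta_neq0 i : (delta_mx i 0 : 'cV[R]_q) != 0.
  by apply/eqP => /matrixP/(_ i 0); rewrite !mxE !eqxx => /eqP; rewrite oner_eq0.
have M22k0 : drsubmx M *m k = 0.
  have [M22k_qf _] := cone_line_const (delta_neq0 i0) N22k0.
  by apply: nsd_qf_eq0 hM22 M22k_qf; case: (sym_blocks sM).
split=> //; apply/matrixP => i j; rewrite (ord1 j) [RHS]mxE.
have [_] := cone_line_const (delta_neq0 i) N22k0.
rewrite bil_mulmx crossIZ mulmxDr mulmxDl -!mulmxA M22k0 !mulmx0 addr0.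
by rewrite trmx_delta -rowE mxE.
Qed.

(* Points of [R^(q+r)] modulo [ker N22]: [(x, Z0 x + X w)]. *)
Definition rangept (x : 'cV[R]_q) (w : 'cV[R]_r) : 'cV[R]_(q + r) :=
  col_mx x (Z0 *m x + X *m w).

Lemma drop_kernel_part A (x : 'cV[R]_q) (y : 'cV[R]_r) : A^T = A ->
  (forall k : 'cV[R]_r, N22 *m k = 0 -> drsubmx A *m k = 0 /\ ursubmx A *m k = 0) ->
  qf A (col_mx x y) = qf A (rangept x (N22 *m (y - Z0 *m x))).
Proof.
move=> sA kerA; set w := N22 *m (y - Z0 *m x).
set k := y - (Z0 *m x + X *m w).
have N22k0 : N22 *m k = 0 by rewrite /k opprD addrA /w mulmxBr !mulmxA N22_X_N22 // subrr.
have [A22k0 A12k0] := kerA k N22k0.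
by rewrite /rangept -(qf_shift_ker x (Z0 *m x + X *m w) sA A22k0 A12k0) /k addrC subrK.
Qed.

Lemma qfN_rangept (x : 'cV[R]_q) (y : 'cV[R]_r) :
  qf N (col_mx x y) = qf N (rangept x (N22 *m (y - Z0 *m x))).
Proof. by apply: drop_kernel_part => // k N22k0; split=> //; exact: hker. Qed.

Lemma qfM_rangept (x : 'cV[R]_q) (y : 'cV[R]_r) :
  qf M (col_mx x y) = qf M (rangept x (N22 *m (y - Z0 *m x))).
Proof. exact: drop_kernel_part sM kernel_inclusion. Qed.

Lemma N22_image_bound :
  exists2 tau, 0 <= tau & forall e, nsq (N22 *m e) <= tau * - qf N22 e.
Proof.
have sym : (0 - N22)^T = 0 - N22.
  by rewrite linearB /= trmx0; case: (sym_blocks sN) => _ _ _ ->.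
have [tau tau_ge0 tau_ok] := psd_image_bound sym hN22.
exists tau => // e; have := tau_ok e.
by rewrite mulmxBl mul0mx sub0r nsqN qf_mxB qf_mx0 sub0r.
Qed.

Lemma margin_on_unit_slice rho : exists2 m, 0 < m & forall x w,
  nsq x = 1 -> nsq w <= rho -> 0 <= qf N (rangept x w) -> m <= qf M (rangept x w).
Proof.
pose T : 'M[R]_(q + r) := block_mx 1%:M 0 Z0 X.
have T_col x w : T *m col_mx x w = rangept x w.
  by rewrite mul_block_col mul1mx mul0mx addr0.
pose A : 'M[R]_(q + r) := block_mx 1%:M 0 0 0.
have A_col x w : qf A (col_mx x w) = nsq x by rewrite qf_block_diag qf_mx0 addr0 nsq_qf.
have M_pos p : qf A p = 1 -> nsq p <= 1 + rho ->
    0 <= qf (T^T *m N *m T) p -> 0 < qf (T^T *m M *m T) p.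
  rewrite -[p]vsubmxK A_col -!qf_mulmx T_col => x1 _.
  by apply: M_pos_on_cone; rewrite -nsq_eq0 x1 oner_eq0.
have [m m_gt0 m_le] := qf_positive_min M_pos.
exists m => // x w x1 w_le N_ge0; have := m_le (col_mx x w).
by rewrite A_col nsq_col -!qf_mulmx T_col x1; apply=> //; rewrite lerD2l.
Qed.

Lemma margin_on_range rho : exists2 m, 0 < m & forall x w,
  nsq w <= rho * nsq x -> 0 <= qf N (rangept x w) -> m * nsq x <= qf M (rangept x w).
Proof.
have [m m_gt0 m_le] := margin_on_unit_slice rho.
exists m => // x w w_le N_ge0.
have [x0|x_neq0] := eqVneq x 0.
  have w0 : w = 0.
    apply/eqP; rewrite -nsq_eq0 eq_le nsq_ge0 andbT.
    by move: w_le; rewrite x0 nsq0 mulr0.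
  by rewrite x0 w0 /rangept !mulmx0 addr0 col_mx0 qf0 nsq0 mulr0.
set n := nsq x; have n_gt0 : 0 < n by rewrite nsq_gt0.
set c := (Num.sqrt n)^-1.
have c2 : c ^+ 2 = n^-1 by rewrite exprVn sqr_sqrtr // ltW.
have scale : rangept (c *: x) (c *: w) = c *: rangept x w.
  by rewrite /rangept -!scalemxAr -scalerDr scale_col_mx.
have w_le' : n^-1 * nsq w <= rho by rewrite mulrC ler_pdivrMr.
have N_ge0' : 0 <= n^-1 * qf N (rangept x w) by rewrite mulr_ge0 // invr_ge0 ltW.
have := m_le (c *: x) (c *: w); rewrite scale !qfZ !nsqZ c2 mulVf ?gt_eqF //.
move=> /(_ erefl w_le' N_ge0') m_le'.
by rewrite -ler_pdivlMr // (mulrC (qf M _)).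
Qed.

Lemma margin : exists2 m, 0 < m &
  forall u, 0 <= qf N u -> m * nsq (usubmx u) <= qf M u.
Proof.
have [tau tau_ge0 tau_ok] := N22_image_bound.
have [sig sig_ge0 sig_ok] := psd_norm_bound (schur_sym sN hX) hS.
have [m m_gt0 m_le] := margin_on_range (tau * sig).
exists m => // u; rewrite -[u]vsubmxK col_mxKu => N_ge0.
rewrite qfM_rangept; apply: m_le; last by rewrite -qfN_rangept.
move: N_ge0; rewrite (schur_qfE sN hX hker) => F_ge0.
apply: le_trans (tau_ok _) _; rewrite -mulrA ler_wpM2l //.
by apply: le_trans (sig_ok _); lra.
Qed.

(* On the range vectors, [M] is bounded below by [m |x|^2 - kap |w|^2]:
   expand [M] along [(x, Z0 x) + (0, X w)], use the margin on [(x, Z0 x)]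
   (where [N = S >= 0]) and Young's inequality on the cross term. *)
Lemma range_lower_bound : exists m kap, [/\ 0 < m, 0 <= kap &
  forall x w, m * nsq x - kap * nsq w <= qf M (rangept x w)].
Proof.
have [m m_gt0 m_ok] := margin.
have sM22 : (drsubmx M)^T = drsubmx M by case: (sym_blocks sM).
pose B := (IZ Z0)^T *m M *m E2 *m X.
have qB w : qf (B^T *m B) w = nsq (B *m w) by rewrite nsq_qf qf_mulmx mulmx1.
have [K1 K1_ge0 K1_ok] : exists2 K, 0 <= K & forall w, qf (B^T *m B) w <= K * nsq w.
  apply: psd_norm_bound; first by rewrite trmx_mul trmxK.
  by move=> w; rewrite -/(qf _ _) qB nsq_ge0.
pose P := - (X^T *m drsubmx M *m X).
have qP w : qf P w = - qf (drsubmx M) (X *m w) by rewrite qf_mxN qf_mulmx.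
have [K2 K2_ge0 K2_ok] : exists2 K, 0 <= K & forall w, qf P w <= K * nsq w.
  apply: psd_norm_bound; first by rewrite /P linearN /= !trmx_mul trmxK sM22 mulmxA.
  by move=> w; rewrite -/(qf _ _) qP oppr_ge0 nsd_qf.
have m2_gt0 : 0 < m / 2 by rewrite divr_gt0.
exists (m / 2), (2 * K1 / m + K2); split => // [|x w].
  by rewrite addr_ge0 // divr_ge0 ?mulr_ge0 // ltW.
have expand : qf M (rangept x w) = qf M (IZ Z0 *m x) + 2 * (x^T *m (B *m w)) 0 0
    + qf (drsubmx M) (X *m w).
  by rewrite /rangept -IZ_E2 qfD // bil_mulmx [qf M (E2 *m _)]qf_mulmx quadE2 /B !mulmxA.
have Mx : m * nsq x <= qf M (IZ Z0 *m x).
  have := m_ok (IZ Z0 *m x); rewrite IZ_mul col_mxKu; apply.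
  by rewrite -[Z0 *m x]addr0 (schur_qf sN hX hker) qf0 addr0; exact: (hS x).
have cross := young x (B *m w) m2_gt0.
have Bw : (m / 2)^-1 * nsq (B *m w) <= 2 * K1 / m * nsq w.
  have -> : 2 * K1 / m * nsq w = (m / 2)^-1 * (K1 * nsq w) by field; rewrite gt_eqF.
  by apply: ler_wpM2l; [rewrite invr_ge0 ltW | rewrite -qB K1_ok].
have := K2_ok w; rewrite qP expand => M22w.
lra.
Qed.

Lemma converse_slater v0 : 0 < qf N v0 ->
  exists al be, 0 <= al /\ 0 < be /\ cond_star M N al be.
Proof.
move=> Nv0_gt0; have [m m_gt0 m_ok] := margin.
pose H := M - m *: block_mx (1%:M : 'M[R]_q) 0 0 (0 : 'M[R]_r).
have qH u : qf H u = qf M u - m * nsq (usubmx u).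
  rewrite qf_mxB qf_mxZ -[u in qf (block_mx _ _ _ _) u]vsubmxK.
  by rewrite qf_block_diag qf_mx0 addr0 -nsq_qf.
have sH : H^T = H by rewrite /H linearB /= linearZ /= tr_block_mx !trmx0 trmx1 sM.
have N_to_H u : 0 <= qf N u -> 0 <= qf H u by rewrite qH subr_ge0; exact: m_ok.
have [al al_ge0 al_ok] := s_lemma sN sH N_to_H Nv0_gt0.
exists al, m; do 2!split=> //; apply/cond_starP => u.
by have := al_ok u; rewrite qH; lra.
Qed.

(* Without a Slater point, [N <= 0] forces [S = 0], so [N] reduces to
   [N22(e)] with [|N22 e|^2 <= tau (- N22(e))]; the range lower bound then
   gives condition (star) directly. *)
Lemma converse_no_slater : (forall u, qf N u <= 0) ->
  exists al be, 0 <= al /\ 0 < be /\ cond_star M N al be.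
Proof.
move=> N_le0.
have S0 x : qf S x = 0.
  apply/le_anti/andP; split; last exact: (hS x).
  by have := N_le0 (col_mx x (Z0 *m x + 0)); rewrite (schur_qf sN hX hker) qf0 addr0.
have [tau tau_ge0 tau_ok] := N22_image_bound.
have [m [kap [m_gt0 kap_ge0 lower]]] := range_lower_bound.
exists (kap * tau), m; split; [exact: mulr_ge0 | split=> //].
apply/cond_starP => u; rewrite -[u]vsubmxK col_mxKu qfM_rangept.
rewrite (schur_qfE sN hX hker) S0 add0r.
set e := dsubmx u - Z0 *m usubmx u.
have := lower (usubmx u) (N22 *m e).
have : kap * nsq (N22 *m e) <= kap * (tau * - qf N22 e) by rewrite ler_wpM2l.
lra.
Qed.

Lemma converse : exists al be, 0 <= al /\ 0 < be /\ cond_star M N al be.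
Proof.
have [[v0 Nv0_gt0]|no_slater] := pselect (exists v0, 0 < qf N v0).
  exact: converse_slater Nv0_gt0.
apply: converse_no_slater => u; rewrite leNgt; apply/negP => Nu_gt0.
by apply: no_slater; exists u.
Qed.

End Converse.

Lemma cond_star_sufficient (R : realType) (q r : nat) (M N : 'M[R]_(q + r)) :
  (exists al be, 0 <= al /\ 0 < be /\ cond_star M N al be) ->
  forall Z, Zset N Z -> Zset_plus M Z.
Proof.
move=> [al [be [al_ge0 [be_gt0 /cond_starP star]]]] Z /ZsetP ZN.
apply/Zset_plusP => a a_neq0; apply: lt_le_trans (star _); rewrite col_mxKu.
by apply: ltr_wpDl; [exact: mulr_ge0 | rewrite mulr_gt0 // nsq_gt0].
Qed.

Theorem mainTheorem13 (R : realType) (q r : nat) (hq : (0 < q)%N)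
    (M N : 'M[R]_(q + r)) (hM : sym_mx M) (hN : sym_mx N) :
  ((exists alpha beta : R, 0 <= alpha /\ 0 < beta /\ cond_star M N alpha beta) ->
     forall Z : 'M[R]_(r, q), Zset N Z -> Zset_plus M Z)
  /\
  (inPi N -> loewner_le (drsubmx M) 0 ->
     ((forall Z : 'M[R]_(r, q), Zset N Z -> Zset_plus M Z) <->
      (exists alpha beta : R, 0 <= alpha /\ 0 < beta /\ cond_star M N alpha beta))).
Proof.
split; first exact: cond_star_sufficient.
move=> [N22_le0 [X [hX hS]] hker] M22_le0; split; last exact: cond_star_sufficient.
by move=> hZ; exact: (converse hM hN hX hker N22_le0 hS M22_le0 hZ (Ordinal hq)).
Qed.
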